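(* Let $G$ be a $2$-connected cubic multigraph, let $H\neq G$ be a peninsula of $G$, and let $e=ab$ be the external port of $H$. Then there exists an $a$-$b$-path in $G$ all of whose internal vertices lie in $V(H)$ and whose length is at least $2\log|H|-2\log\log|H|-8$ (with $\log=\log_2$).
   Context: Multigraphs are finite and loopless, parallel edges allowed; $|H|$ is the number of vertices. A cut of $G$ is a bipartition $(U,V(G)\setminus U)$; its cut-set is the set of edges between the sides. A tombolo-cut is a cut whose cut-set (the tombolo) has exactly $2$ edges. For a tombolo-cut with tombolo $\{a_1b_1,a_2b_2\}$, $a_1,a_2\in U$, the pairs $\{a_1,a_2\}$ and $\{b_1,b_2\}$ are its port-pairs. A virtual subgraph of $G$ is a multigraph $H$ with $V(H)\subseteq V(G)$ whose edges are all edges of $G$ with both ends in $V(H)$ (real edges) plus one (possibly parallel) virtual edge $ab$ for every port-pair $\{a,b\}\subseteq V(H)$ of a tombolo both of whose edges are not in $E(H)$. A peninsula is a virtual subgraph $H$ such that $(V(H),V(G)\setminus V(H))$ is a tombolo-cut, or $H=G$. If $H\ne G$ is a peninsula with tombolo $\{a_1b_1,a_2b_2\}$, $a_1,a_2\in V(H)$, then its external port is the edge $b_1b_2$ (the virtual edge it creates in virtual subgraphs on the other side). *)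

From mathcomp Require Import all_boot.
From Stdlib Require Import Reals.

Set Implicit Arguments.
Unset Strict Implicit.
Unset Printing Implicit Defensive.

Section Multigraph.
Variables (V E : finType) (ends : E -> V * V).

Definition loopless : Prop := forall e : E, (ends e).1 != (ends e).2.

Definition incident (v : V) (e : E) : bool := ((ends e).1 == v) || ((ends e).2 == v).

(* degree of v (no loops, so every incident edge counts once) *)
Definition degree (v : V) : nat := #|[set e | incident v e]|.

Definition cubic : Prop := forall v : V, degree v = 3.

Definition adj : rel V :=
  fun u v => [exists e : E, (ends e == (u, v)) || (ends e == (v, u))].

Definition connected_in (S : {set V}) : Prop :=
  forall u v, u \in S -> v \in S ->
    connect [rel x y | [&& adj x y, x \in S & y \in S]] u v.

(* 2-connected (Diestel): more than 2 vertices, and G - X connected for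
   every X with |X| < 2. *)
Definition two_connected : Prop :=
  2 < #|V| /\ connected_in setT /\ forall x : V, connected_in (setT :\ x).

Definition cutset (U : {set V}) : {set E} :=
  [set e | ((ends e).1 \in U) != ((ends e).2 \in U)].

(* endpoint of e lying outside U (meaningful for e in the cut-set of U) *)
Definition outer_end (U : {set V}) (e : E) : V :=
  if (ends e).1 \in U then (ends e).2 else (ends e).1.

(* p is the list of internal vertices of an a-b-path in G:
   the vertex sequence a :: p ++ [b] is a walk with pairwise distinct vertices. *)
Definition is_path (a : V) (p : seq V) (b : V) : Prop :=
  path adj a (rcons p b) /\ uniq (a :: rcons p b).

Definition path_length (p : seq V) : nat := (size p).+1.

End Multigraph.

Definition log2 (x : R) : R := (ln x / ln 2)%R.

From mathcomp Require Import all_boot.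
From Stdlib Require Import Reals Lra Classical.
From mathcomp Require Import zify.

Set Implicit Arguments.
Unset Strict Implicit.
Unset Printing Implicit Defensive.

(* Let the tombolo be a1 b1, a2 b2 with a1, a2 in U; we close an a1-a2 path
   inside U with the two tombolo edges. By 2-connectivity every vertex of U
   lies on such a path: if u is on one and its neighbour v in U is not, a path
   from v back to it in G - u gives a detour through v. Fix a longest such
   path, with m vertices. Any w in U splits some a1-a2 path into two parts,
   one with at most m/2 edges, so w ends a non-backtracking walk of length at
   most m/2 from a1 or a2. In a cubic graph at most 2^(i+1) vertices end such
   walks of length i from a given vertex, hence |U| <= 2^(m/2 + 3), i.e. the
   b1-b2 path has length m + 1 >= 2 log|U| - 5; this is stronger than the
   claim since log log|U| >= 0. *)

Lemma leq_card_bigcup (I T : finType) (A : {set I}) (F : I -> {set T}) :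
  #|\bigcup_(i in A) F i| <= \sum_(i in A) #|F i|.
Proof.
elim/big_rec2: _ => [|i S n _ IH]; first by rewrite cards0.
by apply: leq_trans (leq_card_setU _ _) _; rewrite leq_add2l.
Qed.

Lemma ex_max_nat (P : nat -> Prop) (N : nat) :
  (exists n, P n) -> (forall n, P n -> n <= N) ->
  exists m, P m /\ forall n, P n -> n <= m.
Proof.
elim: N => [|N IH] [n Pn] leN.
  exists n; split=> // k Pk.
  by have := leN k Pk; have := leN n Pn; rewrite !leqn0 => /eqP -> /eqP ->.
case: (classic (P N.+1)) => [PN|nPN]; first by exists N.+1.
apply: IH => [|k Pk]; first by exists n.
have := leN k Pk; rewrite leq_eqVlt ltnS => /orP[/eqP Ek|//].
by case: nPN; rewrite -Ek.
Qed.

Lemma path_crossing (T : Type) (r : rel T) (P : T -> Prop) x p :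
  path r x p -> P x -> ~ P (last x p) -> exists x' y', [/\ r x' y', P x' & ~ P y'].
Proof.
elim: p x => [|y p IH] x /=; first by move=> _ Px /(_ Px).
case/andP=> rxy ryp Px Pl; case: (classic (P y)) => Py; first exact: IH Py Pl.
by exists x, y.
Qed.

Lemma mem_split_rcons (T : eqType) (x : T) s :
  x \in s -> exists A B, s = rcons A x ++ B.
Proof. by case/splitPr => A B; exists A, B; rewrite cat_rcons. Qed.

Lemma sorted_cat_cons (T : Type) (r : rel T) (A B : seq T) x :
  sorted r (A ++ x :: B) = sorted r (rcons A x) && path r x B.
Proof. by case: A => [|z A] //=; rewrite cat_path rcons_path /= andbA. Qed.

Lemma uniq_insert (T : eqType) (A M B : seq T) : uniq (A ++ B) -> uniq M ->
  {in M, forall z, z \notin A ++ B} -> uniq (A ++ M ++ B).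
Proof.
rewrite !cat_uniq => /and3P[uA AB uB] uM MnAB.
rewrite uA uM uB has_cat negb_or AB /= !andbT.
apply/andP; split; apply/hasPn => z Mz.
  by apply/negP => Az; move: (MnAB z Mz); rewrite mem_cat Az.
by apply/negP => Bz; move: (MnAB z Bz); rewrite mem_cat Mz orbT.
Qed.

Section Multigraph.
Variables (V E : finType) (ends : E -> V * V).
Local Notation adj := (adj ends).

Lemma adjC x y : adj x y = adj y x.
Proof. by apply/existsP/existsP => -[e He]; exists e; rewrite orbC. Qed.

Lemma adj_irr x : loopless ends -> ~~ adj x x.
Proof.
move=> looplessG; apply/existsP => -[e]; rewrite orbb => /eqP ends_e.
by move: (looplessG e); rewrite ends_e eqxx.
Qed.

Lemma path_induced (S : {set V}) x p :
  path [rel y z | [&& adj y z, y \in S & z \in S]] x p -> path adj x p /\ all (mem S) p.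
Proof.
elim: p x => [|y p IH] x //= /andP[/and3P[xy _ yS] /IH[yp pS]].
by rewrite xy yS yp pS.
Qed.

Definition nbr (y : V) : {set V} := [set z | adj y z].

Lemma card_nbr_le_degree y : #|nbr y| <= degree ends y.
Proof.
pose other e := if (ends e).1 == y then (ends e).2 else (ends e).1.
have nbr_other : nbr y \subset other @: [set e | incident ends y e].
  apply/subsetP => z; rewrite inE => /existsP[e He]; apply/imsetP; exists e.
    by rewrite inE /incident; case/orP: He => /eqP -> /=; rewrite eqxx ?orbT.
  by rewrite /other; case/orP: He => /eqP -> /=; rewrite ?eqxx //; case: eqP.
exact: leq_trans (subset_leq_card nbr_other) (leq_imset_card _ _).
Qed.

(* [(x, y) \in nb_arcs s i] iff some non-backtracking walk of length [i] from
   [s] ends with the step [x -> y]; the empty walk is encoded by [(s, s)]. *)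
Fixpoint nb_arcs (s : V) (i : nat) : {set V * V} :=
  if i is i'.+1 then
    \bigcup_(a in nb_arcs s i') [set (a.2, z) | z in nbr a.2 :\ a.1]
  else [set (s, s)].

Definition nb_reach (s : V) (i : nat) : {set V} := [set a.2 | a in nb_arcs s i].

Definition nb_ball (s : V) (h : nat) : {set V} := \bigcup_(i < h.+1) nb_reach s i.

Lemma nb_arcs_adj s i a : a \in nb_arcs s i.+1 -> adj a.1 a.2.
Proof. by case/bigcupP=> b _ /imsetP[z]; rewrite !inE => /andP[_ bz] ->. Qed.

Lemma last_path_nb_reach x p : path adj x p -> uniq (x :: p) ->
  last x p \in nb_reach x (size p).
Proof.
suff: path adj x p -> uniq (x :: p) ->
    exists2 y, y \in x :: p & (y, last x p) \in nb_arcs x (size p).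
  by move=> H xp ux; have [y _ yl] := H xp ux; apply/imsetP; exists (y, last x p).
elim/last_ind: p => [|p z IH]; first by exists x; rewrite ?inE.
rewrite rcons_path -rcons_cons rcons_uniq => /andP[xp lz] /andP[zn up].
have [y yp yl] := IH xp up.
exists (last x p); first by rewrite mem_rcons inE mem_last orbT.
rewrite last_rcons size_rcons; apply/bigcupP; exists (y, last x p) => //.
apply/imsetP; exists z => //; rewrite !inE lz andbT.
by apply: contraNneq zn => ->.
Qed.

Lemma mem_nb_ball s h i w : i <= h -> w \in nb_reach s i -> w \in nb_ball s h.
Proof. by move=> ih wi; apply/bigcupP; exists (Ordinal (ih : i < h.+1)). Qed.

Section Cubic.
Hypothesis cubicG : cubic ends.

Lemma card_nb_arcs s i : #|nb_arcs s i| <= expn 2 i.+1.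
Proof.
case: i => [|i]; first by rewrite cards1.
elim: i => [|i IH].
  apply: leq_trans (leq_card_bigcup _ _) _; rewrite big_set1.
  apply: leq_trans (leq_imset_card _ _) (leq_trans (subset_leq_card (subD1set _ _)) _).
  by rewrite /= (leq_trans (card_nbr_le_degree s)) ?cubicG.
apply: leq_trans (leq_card_bigcup _ _) _.
apply: (@leq_trans (\sum_(a in nb_arcs s i.+1) 2)).
  apply: leq_sum => a /nb_arcs_adj a12; apply: leq_trans (leq_imset_card _ _) _.
  have := card_nbr_le_degree a.2.
  by rewrite cubicG (cardsD1 a.1) inE adjC a12.
by rewrite sum_nat_const expnS mulnC leq_mul2l IH orbT.
Qed.

Lemma card_nb_reach s i : #|nb_reach s i| <= expn 2 i.+1.
Proof. exact: leq_trans (leq_imset_card _ _) (card_nb_arcs s i). Qed.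

Lemma card_nb_ball s h : #|nb_ball s h| <= expn 2 h.+2.
Proof.
elim: h => [|h IH]; first by rewrite /nb_ball big_ord1 (leq_trans (card_nb_reach _ _)).
rewrite /nb_ball big_ord_recr /=; apply: leq_trans (leq_card_setU _ _) _.
by rewrite [expn 2 h.+3]expnS mul2n -addnn leq_add // card_nb_reach.
Qed.

End Cubic.
End Multigraph.

Section Peninsula.
Variables (V E : finType) (ends : E -> V * V) (U : {set V}) (e1 e2 : E).
Hypotheses (looplessG : loopless ends) (cubicG : cubic ends)
  (two_connG : two_connected ends) (cutU : cutset ends U = [set e1; e2]).
Local Notation adj := (adj ends).

Definition inner_end (e : E) : V :=
  if (ends e).1 \in U then (ends e).1 else (ends e).2.

Local Notation a1 := (inner_end e1).
Local Notation a2 := (inner_end e2).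
Local Notation b1 := (outer_end ends U e1).
Local Notation b2 := (outer_end ends U e2).

Lemma cut_edge_ends e : e \in [set e1; e2] ->
  [&& inner_end e \in U, outer_end ends U e \notin U &
      adj (inner_end e) (outer_end ends U e)].
Proof.
rewrite -cutU inE /inner_end /outer_end.
case e1U: ((ends e).1 \in U); case: ((ends e).2 \in U) => //= _;
  rewrite e1U /=; apply/existsP; exists e; case: (ends e) => u v /=;
  by rewrite eqxx ?orbT.
Qed.

Lemma a1_in_U : a1 \in U. Proof. by case/and3P: (cut_edge_ends (set21 e1 e2)). Qed.
Lemma a2_in_U : a2 \in U. Proof. by case/and3P: (cut_edge_ends (set22 e1 e2)). Qed.
Lemma b1_notin_U : b1 \notin U. Proof. by case/and3P: (cut_edge_ends (set21 e1 e2)). Qed.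
Lemma b2_notin_U : b2 \notin U. Proof. by case/and3P: (cut_edge_ends (set22 e1 e2)). Qed.
Lemma adj_a1_b1 : adj a1 b1. Proof. by case/and3P: (cut_edge_ends (set21 e1 e2)). Qed.
Lemma adj_a2_b2 : adj a2 b2. Proof. by case/and3P: (cut_edge_ends (set22 e1 e2)). Qed.

Lemma adj_leaving_U x y : adj x y -> x \in U -> y \notin U ->
  (x = a1 /\ y = b1) \/ (x = a2 /\ y = b2).
Proof.
move=> /existsP[e xy] xU yU.
have e_cut : e \in [set e1; e2].
  by rewrite -cutU inE; case/orP: xy => /eqP -> /=; rewrite xU (negbTE yU).
suff [<- <-] : inner_end e = x /\ outer_end ends U e = y.
  by case/set2P: e_cut => ->; [left|right].
by rewrite /inner_end /outer_end; case/orP: xy => /eqP -> /=; rewrite ?xU ?(negbTE yU).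
Qed.

Lemma exists_nbr_same_side v : exists2 c, adj v c & (c \in U) = (v \in U).
Proof.
have : ~~ ([set e | incident ends v e] \subset [set e1; e2]).
  apply/negP => /subset_leq_card; rewrite -/(degree ends v) cubicG cards2.
  by case: (e1 != e2).
case/subsetPn => e; rewrite inE /incident -cutU inE negbK => ve /eqP same_side.
case/orP: ve => /eqP ve; [exists (ends e).2 | exists (ends e).1];
  rewrite -ve ?same_side //; apply/existsP; exists e;
  by case: (ends e) => ? ? /=; rewrite eqxx ?orbT.
Qed.

Lemma connect_setD1 x u v : u != x -> v != x ->
  connect [rel y z | [&& adj y z, y \in setT :\ x & z \in setT :\ x]] u v.
Proof. by move=> ux vx; case: two_connG => _ [_]; apply; rewrite !inE ?ux ?vx. Qed.

Lemma connect_setT u v :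
  connect [rel y z | [&& adj y z, y \in setT & z \in setT]] u v.
Proof. by case: two_connG => _ [+ _]; apply; rewrite inE. Qed.

(* If a1 = a2 (resp. b1 = b2), deleting it would separate its third
   neighbour from the other side of the cut. *)
Lemma a1_neq_a2 : a1 != a2.
Proof.
apply/eqP => a12.
have [c a1c cU] := exists_nbr_same_side a1; rewrite a1_in_U in cU.
have ca1 : c != a1 by apply: contraTneq a1c => ->; apply: adj_irr.
have b1a1 : b1 != a1 by apply: contraNneq b1_notin_U => ->; apply: a1_in_U.
have /connectP[p cp lp] := connect_setD1 ca1 b1a1.
have lpU : ~ last c p \in U by rewrite -lp; apply/negP; apply: b1_notin_U.
have [x [y [/and3P[xy xa1 _] xU yU]]] :=
  path_crossing (P := fun z => z \in U) cp cU lpU.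
move: xa1; rewrite !inE andbT.
by case: (adj_leaving_U xy xU (introT negP yU)) => -[-> _]; rewrite ?a12 eqxx.
Qed.

Lemma b1_neq_b2 : b1 != b2.
Proof.
apply/eqP => b12.
have [c b1c cU] := exists_nbr_same_side b1; rewrite (negbTE b1_notin_U) in cU.
have cb1 : c != b1 by apply: contraTneq b1c => ->; apply: adj_irr.
have a1b1 : a1 != b1 by apply: contraTneq a1_in_U => ->; apply: b1_notin_U.
have /connectP[p cp lp] := connect_setD1 cb1 a1b1.
have cnU : c \notin U by rewrite cU.
have lpU : ~ last c p \notin U by rewrite -lp a1_in_U.
have [x [y [/and3P[xy xb1 _] xU yU]]] :=
  path_crossing (P := fun z => z \notin U) cp cnU lpU.
move: xb1 yU; rewrite !inE andbT adjC in xy * => xb1 /negP; rewrite negbK => yU.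
by case: (adj_leaving_U xy yU xU) => -[_ yx]; move: xb1; rewrite yx ?b12 eqxx.
Qed.

Definition U_path (s t : V) (L : seq V) : Prop :=
  [/\ sorted adj L, uniq L, all (mem U) L, L = s :: behead L & last s L = t].

Lemma U_path_rev s t L : U_path s t L -> U_path t s (rev L).
Proof.
case=> sL uL UL Ls lL; move: Ls sL uL UL lL.
case: L => [|x q] //= [->] sL uL UL lL; split.
- by rewrite rev_sorted; apply: sub_path sL => y z; rewrite /= adjC.
- by rewrite rev_uniq.
- by rewrite all_rev.
- by rewrite lastI rev_rcons lL.
- by rewrite rev_cons last_rcons.
Qed.

Lemma U_path_ends s t L : U_path s t L -> s \in L /\ t \in L.
Proof.
by case=> _ _ _ Ls <-; rewrite Ls mem_head; split => //; apply: (mem_last s (behead L)).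
Qed.

Lemma path_stays_in_U x p : path adj x p -> x \in U ->
  all (fun z => (z != a1) && (z != a2)) (x :: p) -> all (mem U) p.
Proof.
elim: p x => [|y p IH] x //= /andP[xy yp] xU /andP[/andP[xa1 xa2] ports].
have yU : y \in U.
  apply/negPn/negP => yU; case: (adj_leaving_U xy xU yU) => -[x_port _];
  by move: xa1 xa2; rewrite x_port eqxx ?andbF.
by rewrite yU (IH y yp yU ports).
Qed.

Lemma U_path_detour s t A u B y v w : U_path s t (rcons A u ++ B) -> y \in B ->
  adj u v -> path adj v (rcons w y) -> uniq (v :: w) -> all (mem U) (v :: w) ->
  ~~ has (mem (rcons A u ++ B)) (v :: w) -> exists L, U_path s t L /\ v \in L.
Proof.
move=> UL_path yB uv vy uvw Uvw vwL.
case/splitPr: yB UL_path vwL => B1 B2 [sL uL UL Ls lL] vwL.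
exists (rcons A u ++ (v :: w) ++ y :: B2); split; last first.
  by rewrite mem_cat mem_head orbT.
split.
- move: sL; rewrite !cat_rcons !sorted_cat_cons => /andP[-> uB] /=.
  rewrite uv -cat_rcons cat_path vy last_rcons /=.
  by move: uB; rewrite cat_path /= => /and3P[].
- apply: uniq_insert uvw _ => [|z vwz].
    by apply: subseq_uniq uL; apply: cat_subseq (subseq_refl _) (suffix_subseq _ _).
  apply: contra (hasPn vwL z vwz); rewrite /= !mem_cat !inE.
  by case/or3P=> ->; rewrite ?orbT.
- by move: UL Uvw; rewrite !all_cat => /and3P[-> _ ->] ->.
- by case: A {sL uL UL lL vwL} Ls => [|z A] /= [->].
- by move: lL; rewrite !last_cat.
Qed.

Lemma U_path_rev_split s t A x B : U_path s t (rcons A x ++ B) ->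
  U_path t s (rcons (rev B) x ++ rev A).
Proof. by move/U_path_rev; rewrite rev_cat rev_rcons cat_rcons. Qed.

Lemma U_path_escape L u v : U_path a1 a2 L -> u \in L -> v \in U -> v \notin L ->
  exists y w, [/\ (y \in L) && (y != u), path adj v (rcons w y), uniq (v :: w),
                  all (mem U) (v :: w) & ~~ has (mem L) (v :: w)].
Proof.
move=> UL uL vU vL; have [a1L a2L] := U_path_ends UL.
pose t := if u == a1 then a2 else a1.
have tL : t \in L by rewrite /t; case: ifP.
have tu : t != u.
  by rewrite /t; case: (u =P a1) => [->|/eqP]; rewrite 1?eq_sym ?a1_neq_a2.
have vu : v != u by apply: contraNneq vL => ->.
have /connectP[p0 vp0 lp0] := connect_setD1 vu tu.
case: (shortenP vp0) lp0 => p /path_induced[vp pu] up _ lp.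
have hit_L : has (mem L) p.
  apply/hasP; exists t => //; have := mem_last v p; rewrite -lp inE.
  by case/orP=> [/eqP tv|//]; move: vL; rewrite -tv tL.
case: (split_find hit_L) vp pu up => y w w2 yL wL.
rewrite cat_path all_cat all_rcons -cat_cons cat_uniq -rcons_cons rcons_uniq.
move=> /andP[vwy _] /andP[/andP[/setD1P[yu _] _] _] /andP[/andP[_ uvw] _].
have vwL : ~~ has (mem L) (v :: w) by rewrite /= negb_or vL.
exists y, w; split => //; first exact/andP.
rewrite /= vU.
apply: path_stays_in_U vU _; first by move: vwy; rewrite rcons_path => /andP[].
apply/allP => z vwz; apply/andP; split; apply: contraNneq vwL => z_port;
  by apply/hasP; exists z; rewrite // z_port.
Qed.

Lemma U_path_extend L u v : U_path a1 a2 L -> u \in L -> v \in U -> adj u v ->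
  v \notin L -> exists L', U_path a1 a2 L' /\ v \in L'.
Proof.
move=> UL uL vU uv vL.
have [y [w [/andP[yL yu] vwy uvw Uvw vwL]]] := U_path_escape UL uL vU vL.
have [A [B L_split]] := mem_split_rcons uL; subst L.
move: yL; rewrite mem_cat mem_rcons inE (negbTE yu) /= => /orP[yA|yB]; last first.
  exact: U_path_detour UL yB uv vwy uvw Uvw vwL.
have yrevA : y \in rev A by rewrite mem_rev.
have vwL' : ~~ has (mem (rcons (rev B) u ++ rev A)) (v :: w).
  by rewrite cat_rcons -rev_rcons -rev_cat (eq_has (mem_rev _)).
have [L' [UL' vL']] := U_path_detour (U_path_rev_split UL) yrevA uv vwy uvw Uvw vwL'.
by exists (rev L'); rewrite mem_rev; split => //; apply: U_path_rev.
Qed.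

Lemma path_to_a2_in_U x p : path adj x p -> uniq (x :: p) -> last x p = a2 ->
  b1 \notin p -> x \in U -> all (mem U) p.
Proof.
elim: p x => [|y p IH] x //= /andP[xy yp] /andP[xp up] lp.
rewrite inE negb_or => /andP[yb1 pb1] xU.
have yU : y \in U.
  apply/negPn/negP => yU; case: (adj_leaving_U xy xU yU) => -[x_port y_port].
    by rewrite y_port eqxx in yb1.
  by move: xp; rewrite x_port -lp (mem_last y p).
by rewrite yU (IH y).
Qed.

Lemma exists_U_path : exists L, U_path a1 a2 L.
Proof.
have a1b1 : a1 != b1 by apply: contraTneq a1_in_U => ->; apply: b1_notin_U.
have a2b1 : a2 != b1 by apply: contraTneq a2_in_U => ->; apply: b1_notin_U.
have /connectP[p0 a1p0 lp0] := connect_setD1 a1b1 a2b1.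
case: (shortenP a1p0) lp0 => p /path_induced[a1p pb1] up _ lp.
exists (a1 :: p); split => //=; rewrite a1_in_U (path_to_a2_in_U a1p) ?a1_in_U //.
by apply/negP => /(allP pb1); rewrite !inE eqxx.
Qed.

Lemma U_path_through w : w \in U -> exists L, U_path a1 a2 L /\ w \in L.
Proof.
move=> wU; pose P z := z \notin U \/ exists L, U_path a1 a2 L /\ z \in L.
apply: NNPP => no_path.
have [L0 UL0] := exists_U_path; have [a1L0 a2L0] := U_path_ends UL0.
have /connectP[p a1p lp] := connect_setT a1 w.
have Pa1 : P a1 by right; exists L0.
have nPw : ~ P (last a1 p) by rewrite -lp => -[|//]; rewrite wU.
have [x [y [/and3P[xy _ _] Px nPy]]] := path_crossing a1p Pa1 nPw.
have yU : y \in U by apply/negPn/negP => yU; apply: nPy; left.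
apply: nPy; right; case: Px => [xU | [L [UL xL]]].
  rewrite adjC in xy; exists L0; split => //.
  by case: (adj_leaving_U xy yU xU) => -[-> _].
have [yL|yL] := boolP (y \in L); first by exists L.
exact: U_path_extend UL xL yU xy yL.
Qed.

Lemma U_path_prefix_reach s t A x B : U_path s t (rcons A x ++ B) ->
  x \in nb_reach ends s (size A).
Proof.
case: A => [|z A] [sL uL _ /= [zs] _].
  by apply/imsetP; exists (s, s); rewrite ?inE -?zs.
rewrite zs in sL uL; move: sL; rewrite /= cat_path => /andP[sAx _].
have := last_path_nb_reach sAx; rewrite last_rcons size_rcons; apply.
by apply: subseq_uniq uL; apply: prefix_subseq.
Qed.

Lemma card_U_sq m : (forall L, U_path a1 a2 L -> size L <= m) ->
  #|U| * #|U| <= expn 2 (m + 6).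
Proof.
move=> leLm; set h := m %/ 2.
have U_balls : U \subset nb_ball ends a1 h :|: nb_ball ends a2 h.
  apply/subsetP => w wU; have [L [UL wL]] := U_path_through wU.
  have [A [B L_split]] := mem_split_rcons wL; subst L.
  have wA := U_path_prefix_reach UL.
  have := U_path_prefix_reach (U_path_rev_split UL); rewrite size_rev => wB.
  have := leLm _ UL; rewrite size_cat size_rcons => ABm.
  have [Ah|Bh] : size A <= h \/ size B <= h.
    by move: (size A) (size B) ABm; rewrite /h => a b; lia.
    by rewrite inE (mem_nb_ball Ah wA).
  by rewrite inE (mem_nb_ball Bh wB) orbT.
have card_U : #|U| <= expn 2 h.+3.
  apply: leq_trans (subset_leq_card U_balls) _.
  apply: leq_trans (leq_card_setU _ _) _.
  by rewrite expnS mul2n -addnn leq_add ?card_nb_ball.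
apply: leq_trans (leq_mul card_U card_U) _.
by rewrite -expnD leq_pexp2l // /h; lia.
Qed.

Lemma exists_longest_U_path :
  exists2 L, U_path a1 a2 L & forall L', U_path a1 a2 L' -> size L' <= size L.
Proof.
pose P n := exists2 L, U_path a1 a2 L & size L = n.
have [|n Pn|m [[L UL <-] maxL]] := @ex_max_nat P #|V|.
- by have [L UL] := exists_U_path; exists (size L), L.
- by case: Pn => L [_ uL _ _ _] <-; rewrite -(card_uniqP uL) max_card.
- by exists L => // L' UL'; apply: maxL; exists L'.
Qed.

Lemma U_path_is_path L : U_path a1 a2 L -> is_path ends b1 L b2.
Proof.
case=> sL uL UL Ls lL; split.
  by move: sL lL; rewrite Ls /= rcons_path => -> ->; rewrite adjC adj_a1_b1 adj_a2_b2.
rewrite /= rcons_uniq uL mem_rcons inE negb_or (negbTE b1_neq_b2) andbT /=.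
by apply/andP; split; apply/negP => /(allP UL); apply/negP;
  rewrite ?b1_notin_U ?b2_notin_U.
Qed.

End Peninsula.

Lemma INR_expn2 k : INR (expn 2 k) = (2 ^ k)%R.
Proof. by elim: k => [|k IH] //; rewrite expnS -multE mult_INR IH. Qed.

Lemma ln_le x y : (0 < x)%R -> (x <= y)%R -> (ln x <= ln y)%R.
Proof. by move=> x_gt0 [xy|<-]; [left; apply: ln_increasing | right]. Qed.

Lemma ln2_gt0 : (0 < ln 2)%R.
Proof. by rewrite -ln_1; apply: ln_increasing; lra. Qed.

Lemma log2_le x y : (0 < x)%R -> (x <= y)%R -> (log2 x <= log2 y)%R.
Proof.
move=> x_gt0 xy; apply: Rmult_le_compat_r (ln_le x_gt0 xy).
by left; apply: Rinv_0_lt_compat ln2_gt0.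
Qed.

Lemma log2_mul x y : (0 < x)%R -> (0 < y)%R -> log2 (x * y) = (log2 x + log2 y)%R.
Proof. by move=> x_gt0 y_gt0; rewrite /log2 ln_mult // /Rdiv Rmult_plus_distr_r. Qed.

Lemma log2_pow2 k : log2 (2 ^ k) = INR k.
Proof.
rewrite /log2 ln_pow /Rdiv ?Rmult_assoc ?Rinv_r ?Rmult_1_r //; last lra.
by apply: Rgt_not_eq ln2_gt0.
Qed.

Lemma two_log2_le n k : (0 < n)%N -> (n * n <= expn 2 k)%N ->
  (2 * log2 (INR n) <= INR k)%R.
Proof.
move=> n_gt0 nn_le; have n_pos : (0 < INR n)%R by apply: lt_0_INR; apply/ltP.
rewrite -(log2_pow2 k) -INR_expn2 -Rplus_diag -log2_mul //.
by apply: log2_le; [apply: Rmult_lt_0_compat | rewrite -mult_INR; apply/le_INR/leP].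
Qed.

(* Stdlib's [ln] is [0] on nonpositive arguments, so [log2 (log2 1) = 0]. *)
Lemma log2_log2_nat_ge0 n : (0 < n)%N -> (0 <= log2 (log2 (INR n)))%R.
Proof.
rewrite leq_eqVlt => /orP[/eqP <-|n_gt1].
  rewrite /log2 /= ln_1 /Rdiv Rmult_0_l /ln.
  by case: Rlt_dec => [/Rlt_irrefl//|_]; rewrite Rmult_0_l; right.
have n_ge2 : (2 ^ 1 <= INR n)%R by rewrite -INR_expn2; apply/le_INR/leP.
have log2n_ge1 : (INR 1 <= log2 (INR n))%R by rewrite -log2_pow2; apply: log2_le n_ge2; lra.
by rewrite -[0%R]/(INR 0) -(log2_pow2 0); apply: log2_le log2n_ge1; rewrite /=; lra.
Qed.

Lemma length_ge_log2 n l : (0 < n)%N -> (n * n <= expn 2 (l + 5))%N ->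
  (INR l >= 2 * log2 (INR n) - 2 * log2 (log2 (INR n)) - 8)%R.
Proof.
move=> n_gt0 /(two_log2_le n_gt0); have := log2_log2_nat_ge0 n_gt0.
by rewrite plus_INR /=; lra.
Qed.

Theorem lemma15 (V E : finType) (ends : E -> V * V) (U : {set V}) (e1 e2 : E) :
  loopless ends -> cubic ends -> two_connected ends ->
  e1 != e2 -> cutset ends U = [set e1; e2] ->
  exists p : seq V,
    is_path ends (outer_end ends U e1) p (outer_end ends U e2) /\
    all (fun v => v \in U) p /\
    (INR (path_length p) >=
       2 * log2 (INR #|U|) - 2 * log2 (log2 (INR #|U|)) - 8)%R.
Proof.
move=> looplessG cubicG two_connG _ cutU.
have [L UL maxL] := exists_longest_U_path two_connG cutU.
exists L; split; [|split].
- exact (U_path_is_path looplessG cubicG two_connG cutU UL).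
- by case: UL.
- have U_gt0 : 0 < #|U| by apply/card_gt0P; exists (inner_end ends U e1); apply: a1_in_U cutU.
  apply: length_ge_log2 U_gt0 _; rewrite /path_length addSnnS.
  exact: card_U_sq looplessG cubicG two_connG cutU _ maxL.
Qed.
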